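(* The set $\mathcal{A}$ is a convex subset of $\mathbb{P}(\mathbb{Z}^+)$. For any $F_1,F_2\in\mathcal{A}$ and $G\in\mathbb{P}(\mathbb{Z}^+)$, one has $F_1*F_2\in\mathcal{A}$ and $\sum_{k\ge0}F_1(k)G^{(k)}\in\mathcal{A}$.
   Context: $\mathbb{P}(\mathbb{Z}^+)$ is the set of functions $F:\mathbb{Z}\to[0,1]$ with $\sum_kF(k)=1$ and $F(k)=0$ for $k<0$. $*$ denotes convolution $(F_1*F_2)(m)=\sum_kF_1(k)F_2(m-k)$, $G^{(k)}$ is the $k$-th convolution power with $G^{(0)}=\delta_0$ (point mass at $0$). $\mathcal{A}=\{F\in\mathbb{P}(\mathbb{Z}^+):\sup_{n\in\mathbb{N}}n\sum_{k}|F^{(n)}(k)-F^{(n+1)}(k)|<\infty\}$. *)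

From Stdlib Require Import Reals ZArith.
From Coquelicot Require Import Coquelicot.
Open Scope R_scope.

Definition PZp (F : Z -> R) : Prop :=
  (forall k : Z, 0 <= F k <= 1) /\
  (forall k : Z, (k < 0)%Z -> F k = 0) /\
  is_series (fun n : nat => F (Z.of_nat n)) 1.

(* Convolution (F1*F2)(m) = sum_k F1(k) F2(m-k).  The sum is taken over
   k >= 0 (the terms with k < 0 vanish since F1 is supported on Z^+). *)
Definition conv (F1 F2 : Z -> R) : Z -> R :=
  fun m => Series (fun k : nat => F1 (Z.of_nat k) * F2 (m - Z.of_nat k)%Z).

Definition delta0 : Z -> R := fun k => if Z.eq_dec k 0 then 1 else 0.

Fixpoint convpow (G : Z -> R) (n : nat) : Z -> R :=
  match n with
  | O => delta0
  | S n' => conv G (convpow G n')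
  end.

(* The sum over k in Z is over k >= 0 (both distributions vanish on k < 0);
   convergence of the series is required explicitly. *)
Definition classA (F : Z -> R) : Prop :=
  PZp F /\
  exists C : R, forall n : nat, exists s : R,
    is_series (fun k : nat =>
      Rabs (convpow F n (Z.of_nat k) - convpow F (S n) (Z.of_nat k))) s /\
    INR n * s <= C.

Definition mixture (F G : Z -> R) : Z -> R :=
  fun m => Series (fun k : nat => F (Z.of_nat k) * convpow G k m).

(* Restricted to N, a distribution F lies in A when sup_n n ||F^(n) - F^(n+1)||_1 < oo, and
   ||.||_1 is submultiplicative for the Cauchy product.  For a convolution the telescoping identity
   (ab)^n - (ab)^(n+1) = (a^n - a^(n+1)) b^n + a^(n+1) (b^n - b^(n+1)) bounds n ||.||_1 by the sum of
   the two constants.  For h = t a + (1 - t) b the binomial expansion writes h^n - h^(n+1) as a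
   combination, with weights C(n,j) t^j (1-t)^(n-j), of the differences a^j - a^(j+1) and
   b^(n-j) - b^(n-j+1); the identities (n+1) t C(n,j) t^j (1-t)^(n-j) = (j+1) C(n+1,j+1) t^(j+1) (1-t)^(n-j)
   and its mirror image turn the weights n+1 into j+1 and n-j+1, which the hypotheses control.  For a
   mixture M = sum_k F(k) G^(k), one has M^(n) = sum_k F^(n)(k) G^(k) (Tonelli), and x |-> sum_k x(k) G^(k)
   is an l^1 contraction. *)

From Stdlib Require Import Reals ZArith Lra Lia.
From Coquelicot Require Import Coquelicot.
Open Scope R_scope.

Lemma sum_f_R0_comm (u : nat -> nat -> R) n m :
  sum_f_R0 (fun i => sum_f_R0 (fun j => u i j) m) n =
  sum_f_R0 (fun j => sum_f_R0 (fun i => u i j) n) m.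
Proof.
  induction n as [|n IHn]; simpl; [reflexivity|].
  rewrite IHn, <- sum_plus. reflexivity.
Qed.

Lemma sum_f_R0_if_le (g : nat -> R) i n : (i <= n)%nat ->
  sum_f_R0 (fun k => if (k <=? i)%nat then g k else 0) n = sum_f_R0 g i.
Proof.
  intros Hin. induction Hin as [|n Hin IHn].
  - apply sum_eq. intros k Hk. destruct (Nat.leb_spec k i); [reflexivity|lia].
  - rewrite tech5, IHn. destruct (Nat.leb_spec (S n) i); [lia|ring].
Qed.

Lemma sum_f_R0_if_ge (h : nat -> R) k d :
  sum_f_R0 (fun i => if (k <=? i)%nat then h i else 0) (k + d) =
  sum_f_R0 (fun j => h (k + j)%nat) d.
Proof.
  induction d as [|d IHd].
  - rewrite Nat.add_0_r. destruct k as [|k]; [reflexivity|].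
    rewrite tech5, sum_eq_R0, Nat.leb_refl; [simpl; rewrite Nat.add_0_r; ring|].
    intros j Hj. destruct (Nat.leb_spec (S k) j); [lia|reflexivity].
  - replace (k + S d)%nat with (S (k + d)) by lia. rewrite !tech5, IHd.
    destruct (Nat.leb_spec k (S (k + d))); [|lia]. do 2 f_equal. lia.
Qed.

Lemma is_series_finite_support (a : nat -> R) N :
  (forall k, (N < k)%nat -> a k = 0) -> is_series a (sum_f_R0 a N).
Proof.
  intros Ha. apply is_series_Reals. intros eps Heps. exists N. intros n Hn.
  replace (sum_f_R0 a n) with (sum_f_R0 a N).
  - unfold Rdist. rewrite Rminus_diag, Rabs_R0. lra.
  - induction Hn as [|n Hn IHn]; [reflexivity|]. simpl. rewrite Ha, IHn by lia. ring.
Qed.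

Lemma Series_zero (a : nat -> R) : (forall n, a n = 0) -> Series a = 0.
Proof.
  intros Ha. rewrite (is_series_unique a (sum_f_R0 a 0)); [apply Ha|].
  apply is_series_finite_support. intros; apply Ha.
Qed.

Lemma sum_f_R0_le_series (a : nat -> R) l n :
  (forall k, 0 <= a k) -> is_series a l -> sum_f_R0 a n <= l.
Proof.
  intros Ha Hl. rewrite <- sum_n_Reals.
  apply is_lim_seq_incr_compare.
  - apply is_lim_seq_ext with (sum_f_R0 a); [intros; symmetry; apply sum_n_Reals|].
    apply is_lim_seq_Reals, is_series_Reals, Hl.
  - intros k. rewrite !sum_n_Reals. simpl. specialize (Ha (S k)). lra.
Qed.

Lemma term_le_series (a : nat -> R) l n :
  (forall k, 0 <= a k) -> is_series a l -> a n <= l.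
Proof.
  intros Ha Hl. apply Rle_trans with (sum_f_R0 a n); [|exact (sum_f_R0_le_series a l n Ha Hl)].
  destruct n as [|n]; simpl; [lra|].
  assert (0 <= sum_f_R0 a n) by (apply cond_pos_sum, Ha). lra.
Qed.

Lemma series_ge0 (a : nat -> R) l : (forall k, 0 <= a k) -> is_series a l -> 0 <= l.
Proof. intros Ha Hl. apply Rle_trans with (a 0%nat); [apply Ha| exact (term_le_series a l 0 Ha Hl)]. Qed.

Lemma is_series_bounded_partial (a : nat -> R) M :
  (forall k, 0 <= a k) -> (forall n, sum_f_R0 a n <= M) -> exists l, is_series a l /\ l <= M.
Proof.
  intros Ha HM.
  destruct (ex_finite_lim_seq_incr (sum_f_R0 a) M) as [l Hl]; [|exact HM|].
  { intros n; simpl. specialize (Ha (S n)). lra. }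
  exists l. split.
  - apply is_series_Reals, is_lim_seq_Reals, Hl.
  - exact (is_lim_seq_le _ _ _ _ HM Hl (is_lim_seq_const M)).
Qed.

Lemma is_series_sum_f_R0 (f : nat -> nat -> R) (L : nat -> R) n :
  (forall i, (i <= n)%nat -> is_series (f i) (L i)) ->
  is_series (fun k => sum_f_R0 (fun i => f i k) n) (sum_f_R0 L n).
Proof.
  intros Hf. induction n as [|n IHn]; simpl; [apply Hf; lia|].
  apply (is_series_plus (fun k => sum_f_R0 (fun i => f i k) n) (f (S n))); [apply IHn|]; intros; apply Hf; lia.
Qed.

(** * Tonelli's theorem for double series *)

Section Tonelli.

Variables (u : nat -> nat -> R) (r : nat -> R) (S : R).
Hypothesis u_ge0 : forall i j, 0 <= u i j.
Hypothesis u_rows : forall i, is_series (u i) (r i).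
Hypothesis r_sum : is_series r S.

Lemma tonelli_le :
  exists c, (forall j, is_series (fun i => u i j) (c j)) /\ exists T, is_series c T /\ T <= S.
Proof.
  assert (Hcol : forall j, ex_series (fun i => u i j)).
  { intros j. apply (@ex_series_le R_AbsRing R_CompleteNormedModule) with r; [|exists S; exact r_sum].
    intros i. change (Rabs (u i j) <= r i). rewrite Rabs_pos_eq by apply u_ge0.
    exact (term_le_series (u i) (r i) j (u_ge0 i) (u_rows i)). }
  exists (fun j => Series (fun i => u i j)). split; [intros j; apply Series_correct, Hcol|].
  apply is_series_bounded_partial.
  - intros j. exact (series_ge0 _ _ (fun i => u_ge0 i j) (Series_correct _ (Hcol j))).
  - intros M.
    assert (Hsum : is_series (fun i => sum_f_R0 (u i) M) (sum_f_R0 (fun j => Series (fun i => u i j)) M)).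
    { apply (is_series_sum_f_R0 (fun j i => u i j)). intros; apply Series_correct, Hcol. }
    rewrite <- (is_series_unique _ _ Hsum), <- (is_series_unique _ _ r_sum).
    apply Series_le; [|exists S; exact r_sum]. intros i. split.
    + apply cond_pos_sum. intros; apply u_ge0.
    + exact (sum_f_R0_le_series (u i) (r i) M (u_ge0 i) (u_rows i)).
Qed.

End Tonelli.

(* Applying [tonelli_le] twice, once to the transpose, gives equality of the two iterated sums. *)
Lemma tonelli (u : nat -> nat -> R) (r : nat -> R) (S : R) :
  (forall i j, 0 <= u i j) -> (forall i, is_series (u i) (r i)) -> is_series r S ->
  exists c, (forall j, is_series (fun i => u i j) (c j)) /\ is_series c S.
Proof.
  intros Hu Hr HS.
  destruct (tonelli_le u r S Hu Hr HS) as [c [Hc [T [HT HTS]]]].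
  destruct (tonelli_le (fun j i => u i j) c T) as [r' [Hr' [S' [HS' HS'T]]]]; auto.
  assert (S' = S).
  { rewrite <- (is_series_unique _ _ HS'), <- (is_series_unique _ _ HS).
    apply Series_ext. intros i. rewrite <- (is_series_unique _ _ (Hr' i)). apply is_series_unique, Hr. }
  exists c. split; [exact Hc|]. replace S with T by lra. exact HT.
Qed.

Lemma is_series_shift (w : nat -> R) k l : is_series w l ->
  is_series (fun p => if (k <=? p)%nat then w (p - k)%nat else 0) l.
Proof.
  intros Hw. destruct k as [|k].
  - eapply is_series_ext; [|exact Hw]. intros p. simpl. f_equal. lia.
  - apply (is_series_decr_n _ (S k)); [lia|].
    rewrite sum_n_Reals, sum_eq_R0.
    2:{ intros j Hj. destruct (Nat.leb_spec (S k) j); [lia|reflexivity]. }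
    match goal with |- is_series _ ?L => replace L with l by (change (l = l + - 0); lra) end.
    eapply is_series_ext; [|exact Hw].
    intros p. simpl. destruct (Nat.leb_spec k (k + p)); [|lia]. f_equal. lia.
Qed.

Lemma is_series_diagonal (w : nat -> nat -> R) (r : nat -> R) (S : R) :
  (forall i j, 0 <= w i j) -> (forall i, is_series (w i) (r i)) -> is_series r S ->
  is_series (fun p => sum_f_R0 (fun k => w k (p - k)%nat) p) S.
Proof.
  intros Hw Hr HS.
  set (v := fun k p => if (k <=? p)%nat then w k (p - k)%nat else 0).
  destruct (tonelli v r S) as [c [Hc HcS]].
  - intros i j; unfold v; destruct (i <=? j)%nat; [apply Hw|lra].
  - intros i. apply is_series_shift, Hr.
  - exact HS.
  - eapply is_series_ext; [|exact HcS]. intros p.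
    rewrite <- (is_series_unique _ _ (Hc p)). apply is_series_unique.
    replace (sum_f_R0 (fun k => w k (p - k)%nat) p) with (sum_f_R0 (fun i => v i p) p).
    + apply is_series_finite_support. intros k Hk. unfold v. destruct (Nat.leb_spec k p); [lia|reflexivity].
    + apply sum_eq. intros i Hi. unfold v. destruct (Nat.leb_spec i p); [reflexivity|lia].
Qed.

(** * The Cauchy product of sequences *)

Definition dirac0 (n : nat) : R := match n with O => 1 | _ => 0 end.

Definition cauchy (a b : nat -> R) (n : nat) : R := sum_f_R0 (fun k => a k * b (n - k)%nat) n.

Fixpoint cpow (a : nat -> R) (n : nat) : nat -> R :=
  match n with O => dirac0 | S n' => cauchy a (cpow a n') end.

Lemma cauchy_ext a a' b b' :
  (forall k, a k = a' k) -> (forall k, b k = b' k) -> forall m, cauchy a b m = cauchy a' b' m.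
Proof. intros Ha Hb m. unfold cauchy. apply sum_eq. intros i _. rewrite Ha, Hb. reflexivity. Qed.

Lemma cpow_ext a a' : (forall k, a k = a' k) -> forall n m, cpow a n m = cpow a' n m.
Proof. intros Ha n. induction n as [|n IHn]; intros m; simpl; [reflexivity|]. apply cauchy_ext; auto. Qed.

Lemma cauchyC a b m : cauchy a b m = cauchy b a m.
Proof.
  unfold cauchy. rewrite <- sum_f_R0_skip. apply sum_eq. intros i Hi.
  replace (m - (m - i))%nat with i by lia. ring.
Qed.

Lemma cauchyA a b c m : cauchy a (cauchy b c) m = cauchy (cauchy a b) c m.
Proof.
  unfold cauchy.
  transitivity (sum_f_R0 (fun i => sum_f_R0 (fun k =>
    if (k <=? i)%nat then a k * b (i - k)%nat * c (m - i)%nat else 0) m) m).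
  2:{ apply sum_eq. intros i Hi.
      rewrite (sum_f_R0_if_le (fun k => a k * b (i - k)%nat * c (m - i)%nat) i m Hi).
      rewrite Rmult_comm, scal_sum. apply sum_eq. intros; ring. }
  rewrite sum_f_R0_comm. apply sum_eq. intros k Hk.
  replace m with (k + (m - k))%nat at 2 by lia.
  rewrite (sum_f_R0_if_ge (fun i => a k * b (i - k)%nat * c (m - i)%nat) k (m - k)).
  rewrite scal_sum. apply sum_eq. intros j Hj.
  replace (k + j - k)%nat with j by lia. replace (m - (k + j))%nat with (m - k - j)%nat by lia. ring.
Qed.

Lemma cauchy_dirac0_r a m : cauchy a dirac0 m = a m.
Proof.
  unfold cauchy. destruct m as [|m]; [simpl; ring|].
  rewrite tech5, sum_eq_R0, Nat.sub_diag; [simpl; ring|].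
  intros k Hk. replace (S m - k)%nat with (S (m - k)) by lia. simpl. ring.
Qed.

Lemma cauchy_dirac0_l a m : cauchy dirac0 a m = a m.
Proof. rewrite cauchyC. apply cauchy_dirac0_r. Qed.

Lemma cauchy_lin_l (x y c : nat -> R) (p q : R) m :
  cauchy (fun k => p * x k + q * y k) c m = p * cauchy x c m + q * cauchy y c m.
Proof. unfold cauchy. rewrite !scal_sum, <- sum_plus. apply sum_eq. intros; ring. Qed.

Lemma cauchy_lin_r (x y c : nat -> R) (p q : R) m :
  cauchy c (fun k => p * x k + q * y k) m = p * cauchy c x m + q * cauchy c y m.
Proof. rewrite cauchyC, cauchy_lin_l, !(cauchyC c). reflexivity. Qed.

Lemma cauchy_sub_l (x y c : nat -> R) m :
  cauchy (fun k => x k - y k) c m = cauchy x c m - cauchy y c m.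
Proof. rewrite (cauchy_ext _ (fun k => 1 * x k + -1 * y k) c c), cauchy_lin_l; intros; ring. Qed.

Lemma cauchy_sub_r (x y c : nat -> R) m :
  cauchy c (fun k => x k - y k) m = cauchy c x m - cauchy c y m.
Proof. rewrite cauchyC, cauchy_sub_l, !(cauchyC c). reflexivity. Qed.

Lemma cauchy_scal_r x y c m : cauchy x (fun p => c * y p) m = c * cauchy x y m.
Proof. rewrite (cauchy_ext x x _ (fun p => c * y p + 0 * y p)), cauchy_lin_r; intros; ring. Qed.

Lemma cauchy_sum_f_R0_r (x : nat -> R) (y : nat -> nat -> R) n m :
  cauchy x (fun p => sum_f_R0 (fun j => y j p) n) m = sum_f_R0 (fun j => cauchy x (y j) m) n.
Proof.
  induction n as [|n IHn]; simpl; [reflexivity|].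
  rewrite <- IHn, (cauchy_ext x x _ (fun p => 1 * sum_f_R0 (fun j => y j p) n + 1 * y (S n) p)),
    cauchy_lin_r; intros; ring.
Qed.

Lemma cpowD g k l m : cauchy (cpow g k) (cpow g l) m = cpow g (k + l) m.
Proof.
  revert m. induction k as [|k IHk]; intros m; simpl; [apply cauchy_dirac0_l|].
  rewrite <- cauchyA. apply cauchy_ext; auto.
Qed.

Lemma cauchyACA a b x y m :
  cauchy (cauchy a b) (cauchy x y) m = cauchy (cauchy a x) (cauchy b y) m.
Proof.
  rewrite <- !cauchyA. apply cauchy_ext; [reflexivity|]. intros k.
  rewrite !cauchyA. apply cauchy_ext; [apply cauchyC|reflexivity].
Qed.

Lemma cpow_cauchy a b n m : cpow (cauchy a b) n m = cauchy (cpow a n) (cpow b n) m.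
Proof.
  revert m. induction n as [|n IHn]; intros m; simpl.
  - rewrite cauchy_dirac0_l. reflexivity.
  - rewrite (cauchy_ext _ (cauchy a b) _ (cauchy (cpow a n) (cpow b n))) by auto.
    apply cauchyACA.
Qed.

Definition summable (a : nat -> R) : Prop := ex_series (fun n => Rabs (a n)).

Definition l1norm (a : nat -> R) : R := Series (fun n => Rabs (a n)).

Lemma l1norm_ge0 a : summable a -> 0 <= l1norm a.
Proof. intros Ha. apply (series_ge0 (fun n => Rabs (a n))); [intros; apply Rabs_pos|apply Series_correct, Ha]. Qed.

Lemma summable_ext x y : (forall k, x k = y k) -> summable x -> summable y.
Proof.
  intros E [l Hl]. exists l. apply (is_series_ext (fun n => Rabs (x n))); [|exact Hl].
  intros; rewrite E; reflexivity.
Qed.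

Lemma l1norm_ext x y : (forall k, x k = y k) -> l1norm y = l1norm x.
Proof. intros E. unfold l1norm. apply Series_ext. intros; rewrite E; reflexivity. Qed.

Lemma summable_le x (b : nat -> R) :
  (forall k, Rabs (x k) <= b k) -> ex_series b -> summable x /\ l1norm x <= Series b.
Proof.
  intros Hx Hb. split.
  - apply (@ex_series_le R_AbsRing R_CompleteNormedModule) with b; [|exact Hb].
    intros k. change (Rabs (Rabs (x k)) <= b k). rewrite Rabs_Rabsolu. apply Hx.
  - apply Series_le; [|exact Hb]. intros; split; [apply Rabs_pos|apply Hx].
Qed.

Lemma summable_cauchy a b :
  summable a -> summable b -> summable (cauchy a b) /\ l1norm (cauchy a b) <= l1norm a * l1norm b.
Proof.
  intros Ha Hb.
  assert (Hab := is_series_mult_pos _ _ _ _ (Series_correct _ Ha) (Series_correct _ Hb)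
    (fun n => Rabs_pos _) (fun n => Rabs_pos _)).
  unfold l1norm at 2 3. rewrite <- (is_series_unique _ _ Hab). apply summable_le; [|eexists; exact Hab].
  intros k. unfold cauchy. eapply Rle_trans; [apply sum_f_R0_triangle|].
  apply sum_Rle. intros; rewrite Rabs_mult; lra.
Qed.

Lemma summable_lin x y p q : summable x -> summable y ->
  summable (fun k => p * x k + q * y k) /\
  l1norm (fun k => p * x k + q * y k) <= Rabs p * l1norm x + Rabs q * l1norm y.
Proof.
  intros Hx Hy.
  assert (Hs : is_series (fun k => Rabs p * Rabs (x k) + Rabs q * Rabs (y k))
                         (Rabs p * l1norm x + Rabs q * l1norm y)).
  { apply (is_series_plus (fun k => Rabs p * Rabs (x k)) (fun k => Rabs q * Rabs (y k)));
      apply (is_series_scal_l _ (fun k => Rabs _)), Series_correct; assumption. }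
  rewrite <- (is_series_unique _ _ Hs). apply summable_le; [|eexists; exact Hs].
  intros k. eapply Rle_trans; [apply Rabs_triang|]. rewrite !Rabs_mult. lra.
Qed.

Lemma summable_sub x y : summable x -> summable y ->
  summable (fun k => x k - y k) /\ l1norm (fun k => x k - y k) <= l1norm x + l1norm y.
Proof.
  intros Hx Hy. destruct (summable_lin x y 1 (-1) Hx Hy) as [Hs Hn].
  assert (E : forall k, 1 * x k + -1 * y k = x k - y k) by (intros; ring).
  split; [exact (summable_ext _ _ E Hs)|].
  rewrite (l1norm_ext _ _ E). rewrite Rabs_R1, (Rabs_left (-1)) in Hn by lra. lra.
Qed.

Lemma summable_sum_f_R0 (c : nat -> R) (y : nat -> nat -> R) n :
  (forall j, (j <= n)%nat -> summable (y j)) ->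
  summable (fun m => sum_f_R0 (fun j => c j * y j m) n) /\
  l1norm (fun m => sum_f_R0 (fun j => c j * y j m) n) <= sum_f_R0 (fun j => Rabs (c j) * l1norm (y j)) n.
Proof.
  intros Hy. induction n as [|n IHn]; simpl.
  - destruct (summable_lin (y 0%nat) (y 0%nat) (c 0%nat) 0) as [H1 H2]; try (apply Hy; lia).
    assert (E : forall m, c 0%nat * y 0%nat m + 0 * y 0%nat m = c 0%nat * y 0%nat m) by (intros; ring).
    split; [exact (summable_ext _ _ E H1)|]. rewrite (l1norm_ext _ _ E). rewrite Rabs_R0 in H2. lra.
  - destruct IHn as [Hs Hn]; [intros; apply Hy; lia|].
    destruct (summable_lin _ (y (S n)) 1 (c (S n)) Hs) as [H1 H2]; [apply Hy; lia|].
    assert (E : forall m, 1 * sum_f_R0 (fun j => c j * y j m) n + c (S n) * y (S n) m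
                          = sum_f_R0 (fun j => c j * y j m) n + c (S n) * y (S n) m) by (intros; ring).
    split; [exact (summable_ext _ _ E H1)|]. rewrite (l1norm_ext _ _ E). rewrite Rabs_R1 in H2. lra.
Qed.

Definition prob (a : nat -> R) : Prop := (forall n, 0 <= a n) /\ is_series a 1.

Lemma prob_summable a : prob a -> summable a /\ l1norm a = 1.
Proof.
  intros [Ha Hs].
  assert (E : forall k, a k = Rabs (a k)) by (intros; symmetry; apply Rabs_pos_eq, Ha).
  split; [exists 1; exact (is_series_ext _ _ _ E Hs)|].
  unfold l1norm. rewrite <- (Series_ext _ _ E). apply is_series_unique, Hs.
Qed.

Lemma prob_le1 a n : prob a -> a n <= 1.
Proof. intros [Ha Hs]. exact (term_le_series a 1 n Ha Hs). Qed.

Lemma prob_ext a b : (forall k, a k = b k) -> prob a -> prob b.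
Proof.
  intros E [Ha Hs]. split; [intros; rewrite <- E; auto|]. exact (is_series_ext _ _ _ E Hs).
Qed.

Lemma prob_dirac0 : prob dirac0.
Proof.
  split; [intros [|n]; simpl; lra|].
  apply (is_series_finite_support dirac0 0). intros [|k] Hk; [lia|reflexivity].
Qed.

Lemma prob_cauchy a b : prob a -> prob b -> prob (cauchy a b).
Proof.
  intros [Ha Hsa] [Hb Hsb]. split.
  - intros n. apply cond_pos_sum. intros. apply Rmult_le_pos; auto.
  - replace 1 with (1 * 1) by ring. apply is_series_mult_pos; auto.
Qed.

Lemma prob_cpow a n : prob a -> prob (cpow a n).
Proof. intros Ha. induction n; simpl; [apply prob_dirac0|apply prob_cauchy; auto]. Qed.

Lemma cpow_bounds g k m : prob g -> 0 <= cpow g k m <= 1.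
Proof. intros Hg. split; [apply (prob_cpow g k Hg)|apply prob_le1, prob_cpow, Hg]. Qed.

Definition pow_diff (a : nat -> R) (n k : nat) : R := cpow a n k - cpow a (S n) k.

(* The condition defining the class A, for sequences indexed by N. *)
Definition ritt (a : nat -> R) : Prop := exists C, forall n, INR n * l1norm (pow_diff a n) <= C.

Lemma summable_pow_diff a n : prob a -> summable (pow_diff a n) /\ l1norm (pow_diff a n) <= 2.
Proof.
  intros Ha. destruct (prob_summable _ (prob_cpow a n Ha)) as [H1 N1].
  destruct (prob_summable _ (prob_cpow a (S n) Ha)) as [H2 N2].
  destruct (summable_sub _ _ H1 H2) as [H3 N3]. split; [exact H3|]. unfold pow_diff. lra.
Qed.

Lemma ritt_succ a : prob a -> ritt a -> exists K, forall n, INR (S n) * l1norm (pow_diff a n) <= K.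
Proof.
  intros Ha [C HC]. exists (C + 2). intros n. rewrite S_INR.
  specialize (HC n). destruct (summable_pow_diff a n Ha). lra.
Qed.

(** * Closure under convolution *)

Lemma pow_diff_cauchy a b n k :
  pow_diff (cauchy a b) n k =
  cauchy (pow_diff a n) (cpow b n) k + cauchy (cpow a (S n)) (pow_diff b n) k.
Proof.
  unfold pow_diff. rewrite !cpow_cauchy, cauchy_sub_l, cauchy_sub_r. simpl. ring.
Qed.

Lemma l1norm_pow_diff_cauchy a b n : prob a -> prob b ->
  l1norm (pow_diff (cauchy a b) n) <= l1norm (pow_diff a n) + l1norm (pow_diff b n).
Proof.
  intros Ha Hb.
  destruct (summable_pow_diff a n Ha) as [Da _]. destruct (summable_pow_diff b n Hb) as [Db _].
  destruct (prob_summable _ (prob_cpow a (S n) Ha)) as [La Na].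
  destruct (prob_summable _ (prob_cpow b n Hb)) as [Lb Nb].
  destruct (summable_cauchy _ _ Da Lb) as [L1 N1]. destruct (summable_cauchy _ _ La Db) as [L2 N2].
  destruct (summable_lin _ _ 1 1 L1 L2) as [_ N3].
  rewrite (l1norm_ext (pow_diff (cauchy a b) n)) in N3; [|intros; rewrite pow_diff_cauchy; ring].
  rewrite Rabs_R1, Nb in *. rewrite Na in N2. lra.
Qed.

Theorem ritt_cauchy a b : prob a -> prob b -> ritt a -> ritt b -> ritt (cauchy a b).
Proof.
  intros Ha Hb [Ca HCa] [Cb HCb]. exists (Ca + Cb). intros n.
  specialize (HCa n). specialize (HCb n). assert (0 <= INR n) by apply pos_INR.
  assert (Hab := l1norm_pow_diff_cauchy a b n Ha Hb). nra.
Qed.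

(** * Closure under convex combinations *)

(* [bw t s n j] is the binomial weight C(n,j) t^j s^(n-j), defined through Pascal's rule. *)
Fixpoint bw (t s : R) (n j : nat) : R :=
  match n, j with
  | O, O => 1
  | O, S _ => 0
  | S n', O => s * bw t s n' O
  | S n', S j' => t * bw t s n' j' + s * bw t s n' (S j')
  end.

Section BinomialWeights.

Variables t s : R.

Lemma bw_gt n j : (n < j)%nat -> bw t s n j = 0.
Proof.
  revert j. induction n as [|n IHn]; intros j Hj; destruct j; simpl; try lia; try ring.
  rewrite !IHn by lia. ring.
Qed.

Lemma bw_0 n : bw t s n 0 = s ^ n.
Proof. induction n as [|n IHn]; simpl; [|rewrite IHn]; ring. Qed.

Lemma bw_succ_r n j : INR (S j) * bw t s (S n) (S j) = INR (S n) * t * bw t s n j.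
Proof.
  revert j. induction n as [|n IHn]; intros j; [destruct j; simpl; ring|].
  destruct j as [|j].
  - change (bw t s (S (S n)) 1) with (t * bw t s (S n) 0 + s * bw t s (S n) 1).
    specialize (IHn 0%nat). change (INR 1) with 1 in *. rewrite Rmult_1_l in IHn.
    rewrite IHn, !bw_0. simpl bw. rewrite !S_INR. simpl pow. ring.
  - change (bw t s (S (S n)) (S (S j))) with (t * bw t s (S n) (S j) + s * bw t s (S n) (S (S j))).
    assert (I1 := IHn j). assert (I2 := IHn (S j)).
    assert (F : bw t s (S n) (S j) = t * bw t s n j + s * bw t s n (S j)) by reflexivity.
    rewrite !S_INR in *.
    transitivity (t * ((INR j + 1) * bw t s (S n) (S j)) + t * bw t s (S n) (S j)
                  + s * ((INR j + 1 + 1) * bw t s (S n) (S (S j)))); [ring|].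
    rewrite I1, I2, F. ring.
Qed.

Lemma bw_succ_l n j : (INR (S n) - INR j) * bw t s (S n) j = INR (S n) * s * bw t s n j.
Proof.
  revert j. induction n as [|n IHn]; intros j; [destruct j as [|[|j]]; simpl; ring|].
  destruct j as [|j].
  - rewrite !bw_0. simpl pow. rewrite !S_INR. simpl INR. ring.
  - change (bw t s (S (S n)) (S j)) with (t * bw t s (S n) j + s * bw t s (S n) (S j)).
    assert (I1 := IHn j). assert (I2 := IHn (S j)).
    assert (F : bw t s (S n) (S j) = t * bw t s n j + s * bw t s n (S j)) by reflexivity.
    rewrite !S_INR in *.
    transitivity (t * ((INR n + 1 - INR j) * bw t s (S n) j)
                  + s * ((INR n + 1 - (INR j + 1)) * bw t s (S n) (S j)) + s * bw t s (S n) (S j)); [ring|].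
    rewrite I1, I2, F. ring.
Qed.

Lemma sum_bw_pascal (E : nat -> R) n :
  sum_f_R0 (fun j => bw t s n j * (t * E (S j) + s * E j)) n =
  sum_f_R0 (fun j => bw t s (S n) j * E j) (S n).
Proof.
  rewrite (decomp_sum (fun j => bw t s (S n) j * E j) (S n)) by lia. simpl Init.Nat.pred.
  rewrite (sum_eq (fun i => bw t s (S n) (S i) * E (S i))
                  (fun i => t * bw t s n i * E (S i) + s * bw t s n (S i) * E (S i))) by (intros; simpl; ring).
  rewrite sum_plus.
  assert (Hs : s * bw t s n 0 * E 0%nat + sum_f_R0 (fun i => s * bw t s n (S i) * E (S i)) n
               = sum_f_R0 (fun i => s * bw t s n i * E i) n).
  { transitivity (sum_f_R0 (fun i => s * bw t s n i * E i) (S n)); [symmetry; apply decomp_sum; lia|].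
    rewrite tech5, bw_gt by lia. ring. }
  replace (bw t s (S n) 0) with (s * bw t s n 0) by reflexivity.
  transitivity (sum_f_R0 (fun i => t * bw t s n i * E (S i)) n + sum_f_R0 (fun i => s * bw t s n i * E i) n).
  - rewrite <- sum_plus. apply sum_eq. intros; ring.
  - rewrite <- Hs. ring.
Qed.

Hypotheses (t_ge0 : 0 <= t) (s_ge0 : 0 <= s) (t_plus_s : t + s = 1).

Lemma bw_ge0 n j : 0 <= bw t s n j.
Proof.
  revert j. induction n as [|n IHn]; intros j; destruct j; simpl; try lra.
  - specialize (IHn 0%nat). nra.
  - specialize (IHn j) as H1. specialize (IHn (S j)). nra.
Qed.

Lemma bw_sum n : sum_f_R0 (bw t s n) n = 1.
Proof.
  induction n as [|n IHn]; [reflexivity|].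
  assert (Hsh : bw t s n 0 + sum_f_R0 (fun i => bw t s n (S i)) n = 1).
  { transitivity (sum_f_R0 (bw t s n) (S n)); [symmetry; apply decomp_sum; lia|].
    rewrite tech5, bw_gt, IHn by lia. ring. }
  rewrite decomp_sum by lia. simpl Init.Nat.pred.
  rewrite (sum_eq _ (fun i => bw t s n i * t + bw t s n (S i) * s)) by (intros; simpl; ring).
  rewrite sum_plus, <- !scal_sum, IHn.
  replace (bw t s (S n) 0) with (s * bw t s n 0) by reflexivity.
  transitivity (t + s * (bw t s n 0 + sum_f_R0 (fun i => bw t s n (S i)) n)); [ring|].
  rewrite Hsh. lra.
Qed.

Lemma sum_bw_succ_r n : sum_f_R0 (fun j => bw t s (S n) (S j)) n <= 1.
Proof.
  assert (H := bw_sum (S n)). rewrite decomp_sum in H by lia. simpl Init.Nat.pred in H.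
  assert (0 <= bw t s (S n) 0) by apply bw_ge0. lra.
Qed.

Lemma sum_bw_succ_l n : sum_f_R0 (bw t s (S n)) n <= 1.
Proof.
  assert (H := bw_sum (S n)). rewrite tech5 in H.
  assert (0 <= bw t s (S n) (S n)) by apply bw_ge0. lra.
Qed.

Lemma bw_weighted_le n j x y Ka Kb : (j <= n)%nat -> 0 <= x -> 0 <= y ->
  INR (S j) * x <= Ka -> INR (S (n - j)) * y <= Kb ->
  INR (S n) * (bw t s n j * (t * x + s * y)) <= Ka * bw t s (S n) (S j) + Kb * bw t s (S n) j.
Proof.
  intros Hjn Hx Hy HKa HKb.
  assert (I1 := bw_succ_r n j). assert (I2 := bw_succ_l n j).
  replace (INR (S n) - INR j) with (INR (S (n - j))) in I2 by (rewrite !S_INR, minus_INR by lia; ring).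
  assert (B1 := bw_ge0 (S n) (S j)). assert (B2 := bw_ge0 (S n) j).
  transitivity (INR (S j) * bw t s (S n) (S j) * x + INR (S (n - j)) * bw t s (S n) j * y).
  - rewrite I1, I2. right; ring.
  - assert (bw t s (S n) (S j) * (INR (S j) * x) <= bw t s (S n) (S j) * Ka) by (apply Rmult_le_compat_l; assumption).
    assert (bw t s (S n) j * (INR (S (n - j)) * y) <= bw t s (S n) j * Kb) by (apply Rmult_le_compat_l; assumption).
    lra.
Qed.

End BinomialWeights.

Definition mixed_pow (a b : nat -> R) (j k : nat) : nat -> R := cauchy (cpow a j) (cpow b k).

Section ConvexCombination.

Variables (a b : nat -> R) (t s : R).

Let h (k : nat) : R := t * a k + s * b k.

Lemma cauchy_lin_mixed_pow j k m :
  cauchy h (mixed_pow a b j k) m = t * mixed_pow a b (S j) k m + s * mixed_pow a b j (S k) m.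
Proof.
  unfold h, mixed_pow. rewrite cauchy_lin_l. f_equal; f_equal; [apply cauchyA|].
  rewrite cauchyA, (cauchy_ext _ (cauchy (cpow a j) b) (cpow b k) (cpow b k))
    by (intros; apply cauchyC || reflexivity).
  rewrite <- cauchyA. reflexivity.
Qed.

Lemma cpow_lin_binomial n m :
  cpow h n m = sum_f_R0 (fun j => bw t s n j * mixed_pow a b j (n - j) m) n.
Proof.
  revert m. induction n as [|n IHn]; intros m.
  - unfold mixed_pow. simpl. rewrite cauchy_dirac0_l. ring.
  - change (cpow h (S n) m) with (cauchy h (cpow h n) m).
    rewrite (cauchy_ext h h _ (fun p => sum_f_R0 (fun j => bw t s n j * mixed_pow a b j (n - j) p) n)),
      cauchy_sum_f_R0_r by auto.
    rewrite <- (sum_bw_pascal t s (fun j => mixed_pow a b j (S n - j) m)).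
    apply sum_eq. intros j Hj.
    rewrite cauchy_scal_r, cauchy_lin_mixed_pow.
    replace (S n - S j)%nat with (n - j)%nat by lia. replace (S n - j)%nat with (S (n - j)) by lia. ring.
Qed.

Hypotheses (t_ge0 : 0 <= t) (s_ge0 : 0 <= s) (t_plus_s : t + s = 1).

Let pow_diff_term (j k : nat) (m : nat) : R :=
  t * cauchy (pow_diff a j) (cpow b k) m + s * cauchy (cpow a j) (pow_diff b k) m.

Lemma pow_diff_lin_binomial n m :
  pow_diff h n m = sum_f_R0 (fun j => bw t s n j * pow_diff_term j (n - j) m) n.
Proof.
  unfold pow_diff. change (cpow h (S n) m) with (cauchy h (cpow h n) m).
  rewrite (cauchy_ext h h _ (fun p => sum_f_R0 (fun j => bw t s n j * mixed_pow a b j (n - j) p) n)),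
    cauchy_sum_f_R0_r, cpow_lin_binomial, <- minus_sum by (reflexivity || apply cpow_lin_binomial).
  apply sum_eq. intros j Hj. unfold pow_diff_term, pow_diff.
  rewrite cauchy_scal_r, cauchy_lin_mixed_pow, cauchy_sub_l, cauchy_sub_r.
  unfold mixed_pow. replace s with (1 - t) by lra. ring.
Qed.

Hypotheses (a_prob : prob a) (b_prob : prob b).

Lemma prob_lin : prob h.
Proof.
  destruct a_prob as [Ha Hsa]. destruct b_prob as [Hb Hsb]. split.
  - intros n. unfold h. specialize (Ha n). specialize (Hb n). nra.
  - replace 1 with (t * 1 + s * 1) by lra.
    exact (is_series_plus _ _ _ _ (is_series_scal_l t a 1 Hsa) (is_series_scal_l s b 1 Hsb)).
Qed.

Lemma summable_pow_diff_term j k :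
  summable (pow_diff_term j k) /\
  l1norm (pow_diff_term j k) <= t * l1norm (pow_diff a j) + s * l1norm (pow_diff b k).
Proof.
  destruct (summable_pow_diff a j a_prob) as [Da _]. destruct (summable_pow_diff b k b_prob) as [Db _].
  destruct (prob_summable _ (prob_cpow a j a_prob)) as [La Na].
  destruct (prob_summable _ (prob_cpow b k b_prob)) as [Lb Nb].
  destruct (summable_cauchy _ _ Da Lb) as [L1 N1]. destruct (summable_cauchy _ _ La Db) as [L2 N2].
  destruct (summable_lin _ _ t s L1 L2) as [L3 N3].
  rewrite Nb in N1. rewrite Na in N2. rewrite (Rabs_pos_eq t), (Rabs_pos_eq s) in N3 by assumption.
  split; [exact L3|]. unfold pow_diff_term. nra.
Qed.

Lemma sum_bw_pow_diff_term_le n Ka Kb :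
  (forall j, INR (S j) * l1norm (pow_diff a j) <= Ka) ->
  (forall k, INR (S k) * l1norm (pow_diff b k) <= Kb) ->
  INR (S n) * sum_f_R0 (fun j => Rabs (bw t s n j) * l1norm (pow_diff_term j (n - j))) n <= Ka + Kb.
Proof.
  intros HKa HKb.
  assert (Ka_ge0 : 0 <= Ka).
  { apply Rle_trans with (INR 1 * l1norm (pow_diff a 0)); [|apply HKa].
    apply Rmult_le_pos; [apply pos_INR|apply l1norm_ge0, summable_pow_diff, a_prob]. }
  assert (Kb_ge0 : 0 <= Kb).
  { apply Rle_trans with (INR 1 * l1norm (pow_diff b 0)); [|apply HKb].
    apply Rmult_le_pos; [apply pos_INR|apply l1norm_ge0, summable_pow_diff, b_prob]. }
  rewrite scal_sum.
  apply Rle_trans with (sum_f_R0 (fun j => bw t s (S n) (S j) * Ka + bw t s (S n) j * Kb) n).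
  - apply sum_Rle. intros j Hj.
    destruct (summable_pow_diff_term j (n - j)) as [_ Nj].
    rewrite Rabs_pos_eq by (apply bw_ge0; assumption).
    apply Rle_trans with (INR (S n) * (bw t s n j * (t * l1norm (pow_diff a j) + s * l1norm (pow_diff b (n - j))))).
    + rewrite Rmult_comm. apply Rmult_le_compat_l; [apply pos_INR|].
      apply Rmult_le_compat_l; [apply bw_ge0; assumption|exact Nj].
    + rewrite (Rmult_comm _ Ka), (Rmult_comm _ Kb).
      apply bw_weighted_le; auto; apply l1norm_ge0, summable_pow_diff; assumption.
  - rewrite sum_plus, <- !scal_sum.
    assert (Ka * sum_f_R0 (fun j => bw t s (S n) (S j)) n <= Ka * 1)
      by (apply Rmult_le_compat_l; [|apply sum_bw_succ_r]; assumption).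
    assert (Kb * sum_f_R0 (bw t s (S n)) n <= Kb * 1)
      by (apply Rmult_le_compat_l; [|apply sum_bw_succ_l]; assumption).
    lra.
Qed.

Theorem ritt_lin : ritt a -> ritt b -> ritt h.
Proof.
  intros Ra Rb.
  destruct (ritt_succ a a_prob Ra) as [Ka HKa]. destruct (ritt_succ b b_prob Rb) as [Kb HKb].
  exists (Ka + Kb). intros n.
  destruct (summable_sum_f_R0 (bw t s n) (fun j => pow_diff_term j (n - j)) n) as [_ Ns].
  { intros j _. apply summable_pow_diff_term. }
  rewrite (l1norm_ext (pow_diff h n)) in Ns by (intros; apply pow_diff_lin_binomial).
  assert (Hsum := sum_bw_pow_diff_term_le n Ka Kb HKa HKb).
  assert (0 <= l1norm (pow_diff h n)) by apply l1norm_ge0, summable_pow_diff, prob_lin.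
  assert (INR (S n) * l1norm (pow_diff h n) <= INR (S n) * sum_f_R0 (fun j => Rabs (bw t s n j) * l1norm (pow_diff_term j (n - j))) n)
    by (apply Rmult_le_compat_l; [apply pos_INR|exact Ns]).
  rewrite S_INR in *. lra.
Qed.

End ConvexCombination.

(** * Closure under mixtures *)

Definition mixn (a g : nat -> R) (m : nat) : R := Series (fun k => a k * cpow g k m).

Section Mixture.

Variable g : nat -> R.
Hypothesis g_prob : prob g.

Lemma is_series_mixn x m : (forall k, 0 <= x k) -> ex_series x ->
  is_series (fun k => x k * cpow g k m) (mixn x g m).
Proof.
  intros Hx Ex. apply Series_correct.
  apply (@ex_series_le R_AbsRing R_CompleteNormedModule) with x; [|exact Ex].
  intros k. change (Rabs (x k * cpow g k m) <= x k). destruct (cpow_bounds g k m g_prob).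
  specialize (Hx k). rewrite Rabs_pos_eq by nra. nra.
Qed.

Lemma prob_mixn a : prob a -> prob (mixn a g).
Proof.
  intros [Ha Hs].
  destruct (tonelli (fun k m => a k * cpow g k m) (fun k => a k * 1) 1) as [c [Hc Hcs]].
  - intros i j. destruct (cpow_bounds g i j g_prob). specialize (Ha i). nra.
  - intros i. apply (is_series_scal_l (a i) (cpow g i) 1), prob_cpow, g_prob.
  - eapply is_series_ext; [|exact Hs]. intros; simpl; ring.
  - assert (E : forall m, c m = mixn a g m) by (intros m; rewrite <- (is_series_unique _ _ (Hc m)); reflexivity).
    split; [|exact (is_series_ext _ _ _ E Hcs)].
    intros m. rewrite <- E. apply (series_ge0 (fun k => a k * cpow g k m)); [|apply Hc].
    intros k. destruct (cpow_bounds g k m g_prob). specialize (Ha k). nra.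
Qed.

Lemma mixn_dirac0 m : mixn dirac0 g m = dirac0 m.
Proof.
  unfold mixn. replace (dirac0 m) with (sum_f_R0 (fun k => dirac0 k * cpow g k m) 0) by (simpl; ring).
  apply is_series_unique, is_series_finite_support. intros [|k] Hk; [lia|simpl; ring].
Qed.

(* Both sides are the sum of [x k * y l * cpow g (k + l) m] over the pairs (k, l), grouped in two ways. *)
Lemma mixn_cauchy x y m : (forall k, 0 <= x k) -> ex_series x -> (forall k, 0 <= y k) -> ex_series y ->
  cauchy (mixn x g) (mixn y g) m = mixn (cauchy x y) g m.
Proof.
  intros Hx Ex Hy Ey.
  set (w := fun k l => x k * y l * cpow g (k + l) m).
  set (r := fun k => sum_f_R0 (fun i => x k * cpow g k i * mixn y g (m - i)) m).
  assert (Hw : forall k, is_series (w k) (r k)).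
  { intros k. unfold r.
    apply (is_series_ext (fun l => sum_f_R0 (fun i => (x k * cpow g k i) * (y l * cpow g l (m - i))) m)).
    - intros l. unfold w. rewrite <- cpowD. unfold cauchy. rewrite scal_sum. apply sum_eq. intros; ring.
    - apply (is_series_sum_f_R0 (fun i l => (x k * cpow g k i) * (y l * cpow g l (m - i)))).
      intros i _. apply (is_series_scal_l (x k * cpow g k i) (fun l => y l * cpow g l (m - i))).
      apply is_series_mixn; assumption. }
  assert (Hr : is_series r (cauchy (mixn x g) (mixn y g) m)).
  { apply (is_series_sum_f_R0 (fun i k => x k * cpow g k i * mixn y g (m - i))).
    intros i _. apply (is_series_scal_r (mixn y g (m - i)) (fun k => x k * cpow g k i)).
    apply is_series_mixn; assumption. }
  assert (Hw_ge0 : forall i j, 0 <= w i j).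
  { intros i j. unfold w. destruct (cpow_bounds g (i + j) m g_prob).
    specialize (Hx i). specialize (Hy j). apply Rmult_le_pos; [apply Rmult_le_pos|]; lra. }
  symmetry. apply is_series_unique.
  eapply is_series_ext; [|exact (is_series_diagonal w r _ Hw_ge0 Hw Hr)].
  intros p. unfold w, cauchy. rewrite (Rmult_comm (sum_f_R0 _ p)), scal_sum. apply sum_eq. intros k Hk.
  replace (k + (p - k))%nat with p by lia. ring.
Qed.

Lemma cpow_mixn a n m : prob a -> cpow (mixn a g) n m = mixn (cpow a n) g m.
Proof.
  intros Ha. revert m. induction n as [|n IHn]; intros m; simpl; [symmetry; apply mixn_dirac0|].
  rewrite (cauchy_ext (mixn a g) (mixn a g) _ (mixn (cpow a n) g)) by auto.
  destruct (prob_cpow a n Ha) as [Hn Hsn]. destruct Ha as [Ha Hsa].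
  apply mixn_cauchy; auto; eexists; eassumption.
Qed.

Lemma l1norm_mixn_sub x y : prob x -> prob y ->
  l1norm (fun m => mixn x g m - mixn y g m) <= l1norm (fun k => x k - y k).
Proof.
  intros Hx Hy.
  destruct (prob_summable _ Hx) as [Lx _]. destruct (prob_summable _ Hy) as [Ly _].
  destruct (summable_sub _ _ Lx Ly) as [Ld _].
  set (d := fun k => x k - y k).
  destruct (tonelli (fun k m => Rabs (d k) * cpow g k m) (fun k => Rabs (d k) * 1) (l1norm d)) as [c [Hc Hcs]].
  - intros i j. destruct (cpow_bounds g i j g_prob). apply Rmult_le_pos; [apply Rabs_pos|lra].
  - intros i. apply (is_series_scal_l (Rabs (d i)) (cpow g i) 1), prob_cpow, g_prob.
  - eapply is_series_ext; [|apply Series_correct, Ld]. intros; simpl; ring.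
  - rewrite <- (is_series_unique _ _ Hcs). apply summable_le; [|eexists; exact Hcs].
    intros m.
    assert (E : mixn x g m - mixn y g m = Series (fun k => d k * cpow g k m)).
    { symmetry. apply is_series_unique. unfold d.
      eapply is_series_ext;
        [|exact (is_series_minus _ _ _ _ (is_series_mixn x m (proj1 Hx) (ex_intro _ 1 (proj2 Hx)))
                                          (is_series_mixn y m (proj1 Hy) (ex_intro _ 1 (proj2 Hy))))].
      intros; simpl. unfold plus, opp; simpl. ring. }
    assert (Eabs : forall k, Rabs (d k * cpow g k m) = Rabs (d k) * cpow g k m).
    { intros k. rewrite Rabs_mult, (Rabs_pos_eq (cpow g k m)) by apply (cpow_bounds g k m g_prob). reflexivity. }
    rewrite E. eapply Rle_trans; [apply Series_Rabs; exists (c m); exact (is_series_ext _ _ _ (fun k => eq_sym (Eabs k)) (Hc m))|].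
    rewrite (Series_ext _ (fun k => Rabs (d k) * cpow g k m)) by (intros; apply Eabs).
    rewrite (is_series_unique _ _ (Hc m)). lra.
Qed.

Theorem ritt_mixn a : prob a -> ritt a -> ritt (mixn a g).
Proof.
  intros Ha [C HC]. exists C. intros n.
  apply Rle_trans with (INR n * l1norm (pow_diff a n)); [|apply HC].
  apply Rmult_le_compat_l; [apply pos_INR|].
  rewrite (l1norm_ext (fun m => mixn (cpow a n) g m - mixn (cpow a (S n)) g m))
    by (intros; unfold pow_diff; rewrite !cpow_mixn by exact Ha; reflexivity).
  apply l1norm_mixn_sub; apply prob_cpow, Ha.
Qed.

End Mixture.

(** * Back to distributions on Z *)

Definition to_seq (F : Z -> R) (n : nat) : R := F (Z.of_nat n).

Definition supported (F : Z -> R) : Prop := forall k, (k < 0)%Z -> F k = 0.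

Lemma conv_to_seq F1 F2 m : supported F2 -> conv F1 F2 (Z.of_nat m) = cauchy (to_seq F1) (to_seq F2) m.
Proof.
  intros H2. unfold conv.
  rewrite (is_series_unique _ (sum_f_R0 (fun k => F1 (Z.of_nat k) * F2 (Z.of_nat m - Z.of_nat k)%Z) m)).
  - apply sum_eq. intros i Hi. unfold to_seq. rewrite Nat2Z.inj_sub by lia. reflexivity.
  - apply is_series_finite_support. intros k Hk. rewrite H2 by lia. ring.
Qed.

Lemma conv_supported F1 F2 : supported F2 -> supported (conv F1 F2).
Proof. intros H2 z Hz. apply Series_zero. intros n. rewrite H2 by lia. ring. Qed.

Lemma convpow_supported F n : supported (convpow F n).
Proof.
  induction n as [|n IHn]; simpl; [|apply conv_supported, IHn].
  intros z Hz. unfold delta0. destruct (Z.eq_dec z 0); [lia|reflexivity].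
Qed.

Lemma convpow_to_seq F n m : convpow F n (Z.of_nat m) = cpow (to_seq F) n m.
Proof.
  revert m. induction n as [|n IHn]; intros m; simpl.
  - unfold delta0. destruct m; [reflexivity|].
    destruct (Z.eq_dec (Z.of_nat (S m)) 0); [lia|reflexivity].
  - rewrite conv_to_seq by apply convpow_supported. apply cauchy_ext; [reflexivity|apply IHn].
Qed.

Lemma mixture_to_seq F G m : mixture F G (Z.of_nat m) = mixn (to_seq F) (to_seq G) m.
Proof. apply Series_ext. intros k. rewrite convpow_to_seq. reflexivity. Qed.

Lemma mixture_supported F G : supported (mixture F G).
Proof. intros z Hz. apply Series_zero. intros k. rewrite convpow_supported by exact Hz. ring. Qed.

Lemma PZp_supported F : PZp F -> supported F.
Proof. intros [_ [HF _]]. exact HF. Qed.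

Lemma PZp_prob F : PZp F -> prob (to_seq F).
Proof. intros [H1 [_ H3]]. split; [intros n; apply H1|exact H3]. Qed.

Lemma ritt_ext a b : (forall k, a k = b k) -> ritt a -> ritt b.
Proof.
  intros E [C HC]. exists C. intros n. rewrite (l1norm_ext (pow_diff a n)); [apply HC|].
  intros k. unfold pow_diff. rewrite !(cpow_ext a b E). reflexivity.
Qed.

Lemma classA_iff F : classA F <-> PZp F /\ ritt (to_seq F).
Proof.
  assert (E : forall n k, Rabs (convpow F n (Z.of_nat k) - convpow F (S n) (Z.of_nat k))
                          = Rabs (pow_diff (to_seq F) n k))
    by (intros; unfold pow_diff; rewrite !convpow_to_seq; reflexivity).
  split.
  - intros [HF [C HC]]. split; [exact HF|]. exists C. intros n.
    destruct (HC n) as [s [Hs Hle]].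
    unfold l1norm. rewrite <- (Series_ext _ _ (E n)), (is_series_unique _ _ Hs). exact Hle.
  - intros [HF [C HC]]. split; [exact HF|]. exists C. intros n. exists (l1norm (pow_diff (to_seq F) n)).
    split; [|apply HC].
    apply (is_series_ext _ _ _ (fun k => eq_sym (E n k))), Series_correct.
    apply summable_pow_diff, PZp_prob, HF.
Qed.

Lemma classA_of_seq F a : supported F -> (forall m, to_seq F m = a m) -> prob a -> ritt a -> classA F.
Proof.
  intros HF E Ha Ra. apply classA_iff. split; [|exact (ritt_ext _ _ (fun k => eq_sym (E k)) Ra)].
  apply prob_ext with (b := to_seq F) in Ha; [|intros; symmetry; apply E].
  split; [|split; [exact HF|apply Ha]].
  intros k. destruct (Z_lt_le_dec k 0) as [Hk|Hk]; [rewrite HF by exact Hk; lra|].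
  rewrite <- (Z2Nat.id k) by exact Hk. split; [apply Ha|apply (prob_le1 (to_seq F)), Ha].
Qed.

Theorem proposition4p2 :
  (forall F : Z -> R, classA F -> PZp F) /\
  (forall (F1 F2 : Z -> R) (t : R), classA F1 -> classA F2 -> 0 <= t <= 1 ->
     classA (fun k => t * F1 k + (1 - t) * F2 k)) /\
  (forall (F1 F2 G : Z -> R), classA F1 -> classA F2 -> PZp G ->
     classA (conv F1 F2) /\ classA (mixture F1 G)).
Proof.
  split; [|split].
  - intros F [HF _]. exact HF.
  - intros F1 F2 t H1 H2 Ht.
    apply classA_iff in H1 as [P1 R1]. apply classA_iff in H2 as [P2 R2].
    assert (Q1 := PZp_prob _ P1). assert (Q2 := PZp_prob _ P2).
    apply (classA_of_seq _ (fun k => t * to_seq F1 k + (1 - t) * to_seq F2 k)); [| reflexivity | |].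
    + intros k Hk. rewrite (PZp_supported _ P1 k Hk), (PZp_supported _ P2 k Hk). ring.
    + apply prob_lin; (assumption || lra).
    + apply ritt_lin; (assumption || lra).
  - intros F1 F2 G H1 H2 HG.
    apply classA_iff in H1 as [P1 R1]. apply classA_iff in H2 as [P2 R2].
    assert (Q1 := PZp_prob _ P1). assert (Q2 := PZp_prob _ P2). assert (QG := PZp_prob _ HG).
    split.
    + apply (classA_of_seq _ (cauchy (to_seq F1) (to_seq F2))).
      * apply conv_supported, PZp_supported, P2.
      * intros m. apply conv_to_seq, PZp_supported, P2.
      * apply prob_cauchy; assumption.
      * apply ritt_cauchy; assumption.
    + apply (classA_of_seq _ (mixn (to_seq F1) (to_seq G))).
      * apply mixture_supported.
      * apply mixture_to_seq.
      * apply prob_mixn; assumption.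
      * apply ritt_mixn; assumption.
Qed.
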